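(* In the algebra $\mathcal O_q$ defined in the context, for all $n\in\mathbb N$: $$\mathcal W_{n+1}=-(q-q^{-1})^{-1}\sum_{k=0}^n\sum_{\ell=0}^k\binom{k}{\ell}q^{2\ell-k}[2]_q^{-k-2}\mathcal G_{n-k}\tilde B_{(k-2\ell)\delta+\alpha_0},$$ $$\mathcal W_{-n}=-(q-q^{-1})^{-1}\sum_{k=0}^n\sum_{\ell=0}^k\binom{k}{\ell}q^{k-2\ell}[2]_q^{-k-2}\mathcal G_{n-k}\tilde B_{(k-2\ell)\delta+\alpha_1}.$$
   Context: All algebras are associative and unital over a field $\mathbb F$; $q\in\mathbb F$ is nonzero and not a root of unity; $[n]_q=(q^n-q^{-n})/(q-q^{-1})$. For elements $X,Y$ of an algebra, $[X,Y]=XY-YX$ and $[X,Y]_q=qXY-q^{-1}YX$. Let $\rho=-(q^2-q^{-2})^2$. The algebra $\mathcal O_q$ is defined by generators $\mathcal W_{-k},\mathcal W_{k+1},\mathcal G_{k+1},\tilde{\mathcal G}_{k+1}$ ($k\in\mathbb N$) and the following relations for all $k,\ell\in\mathbb N$: $[\mathcal W_0,\mathcal W_{k+1}]=[\mathcal W_{-k},\mathcal W_1]=(\tilde{\mathcal G}_{k+1}-\mathcal G_{k+1})/(q+q^{-1})$; $[\mathcal W_0,\mathcal G_{k+1}]_q=[\tilde{\mathcal G}_{k+1},\mathcal W_0]_q=\rho\mathcal W_{-k-1}-\rho\mathcal W_{k+1}$; $[\mathcal G_{k+1},\mathcal W_1]_q=[\mathcal W_1,\tilde{\mathcal G}_{k+1}]_q=\rho\mathcal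 W_{k+2}-\rho\mathcal W_{-k}$; $[\mathcal W_{-k},\mathcal W_{-\ell}]=0$, $[\mathcal W_{k+1},\mathcal W_{\ell+1}]=0$; $[\mathcal W_{-k},\mathcal W_{\ell+1}]+[\mathcal W_{k+1},\mathcal W_{-\ell}]=0$; $[\mathcal W_{-k},\mathcal G_{\ell+1}]+[\mathcal G_{k+1},\mathcal W_{-\ell}]=0$; $[\mathcal W_{-k},\tilde{\mathcal G}_{\ell+1}]+[\tilde{\mathcal G}_{k+1},\mathcal W_{-\ell}]=0$; $[\mathcal W_{k+1},\mathcal G_{\ell+1}]+[\mathcal G_{k+1},\mathcal W_{\ell+1}]=0$; $[\mathcal W_{k+1},\tilde{\mathcal G}_{\ell+1}]+[\tilde{\mathcal G}_{k+1},\mathcal W_{\ell+1}]=0$; $[\mathcal G_{k+1},\mathcal G_{\ell+1}]=0$, $[\tilde{\mathcal G}_{k+1},\tilde{\mathcal G}_{\ell+1}]=0$; $[\tilde{\mathcal G}_{k+1},\mathcal G_{\ell+1}]+[\mathcal G_{k+1},\tilde{\mathcal G}_{\ell+1}]=0$. Convention: $\mathcal G_0=-(q-q^{-1})[2]_q^2$. Define $\tilde B_\delta=q^{-2}\mathcal W_0\mathcal W_1-\mathcal W_1\mathcal W_0$; $\tilde B_{\alpha_0}=\mathcal W_1$, $\tilde B_{\delta+\alpha_0}=\mathcal W_0+\frac{q[\tilde B_\delta,\mathcal W_1]}{(q-q^{-1})(q^2-q^{-2})}$, $\tilde B_{n\delta+\alpha_0}=\tilde B_{(n-2)\delta+\alpha_0}+\frac{q[\tilde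 B_\delta,\tilde B_{(n-1)\delta+\alpha_0}]}{(q-q^{-1})(q^2-q^{-2})}$ for $n\ge2$; $\tilde B_{\alpha_1}=\mathcal W_0$, $\tilde B_{\delta+\alpha_1}=\mathcal W_1-\frac{q[\tilde B_\delta,\mathcal W_0]}{(q-q^{-1})(q^2-q^{-2})}$, $\tilde B_{n\delta+\alpha_1}=\tilde B_{(n-2)\delta+\alpha_1}-\frac{q[\tilde B_\delta,\tilde B_{(n-1)\delta+\alpha_1}]}{(q-q^{-1})(q^2-q^{-2})}$ for $n\ge2$. For negative integers $k$, set $\tilde B_{k\delta+\alpha_0}=\tilde B_{(-k-1)\delta+\alpha_1}$ and $\tilde B_{k\delta+\alpha_1}=\tilde B_{(-k-1)\delta+\alpha_0}$. *)

From mathcomp Require Import all_boot all_order all_algebra.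
Set Implicit Arguments. Unset Strict Implicit. Unset Printing Implicit Defensive.
Import Order.TTheory GRing.Theory Num.Theory.
Local Open Scope ring_scope.

(* Conventions: for an F-algebra A, the generators of O_q are given by four
   families indexed by nat:
     Wn k = W_{-k},  Wp k = W_{k+1},  G k = G_{k+1},  Gt k = tilde G_{k+1}. *)

Section Oq.
Variables (F : fieldType) (A : algType F) (q : F).

Definition qint (n : nat) : F := (q ^+ n - q ^- n) / (q - q^-1).
Definition rho : F := - (q ^+ 2 - q ^- 2) ^+ 2.

Definition comm (X Y : A) : A := X * Y - Y * X.
Definition qcomm (X Y : A) : A := q *: (X * Y) - q^-1 *: (Y * X).

Variables (Wn Wp G Gt : nat -> A).

Definition Oq_relations : Prop :=
  forall k l : nat,
  comm (Wn 0) (Wp k) = (q + q^-1)^-1 *: (Gt k - G k) /\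
      comm (Wn k) (Wp 0) = (q + q^-1)^-1 *: (Gt k - G k) /\
      qcomm (Wn 0) (G k) = rho *: Wn k.+1 - rho *: Wp k /\
      qcomm (Gt k) (Wn 0) = rho *: Wn k.+1 - rho *: Wp k /\
      qcomm (G k) (Wp 0) = rho *: Wp k.+1 - rho *: Wn k /\
      qcomm (Wp 0) (Gt k) = rho *: Wp k.+1 - rho *: Wn k /\
      comm (Wn k) (Wn l) = 0 /\
      comm (Wp k) (Wp l) = 0 /\
   comm (Wn k) (Wp l) + comm (Wp k) (Wn l) = 0 /\
       comm (Wn k) (G l) + comm (G k) (Wn l) = 0 /\
       comm (Wn k) (Gt l) + comm (Gt k) (Wn l) = 0 /\
       comm (Wp k) (G l) + comm (G k) (Wp l) = 0 /\
       comm (Wp k) (Gt l) + comm (Gt k) (Wp l) = 0 /\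
       comm (G k) (G l) = 0 /\
       comm (Gt k) (Gt l) = 0 /\
       comm (Gt k) (G l) + comm (G k) (Gt l) = 0.

(* G_n for all n in N, with the convention G_0 = -(q - q^-1) [2]_q^2. *)
Definition Gfull (n : nat) : A :=
  if n is k.+1 then G k else (- (q - q^-1) * qint 2 ^+ 2)%:A.

Definition Bdelta : A := q ^- 2 *: (Wn 0 * Wp 0) - Wp 0 * Wn 0.

Definition Bcoef : F := q / ((q - q^-1) * (q ^+ 2 - q ^- 2)).

(* pairs (B_{n delta + alpha_0}, B_{(n+1) delta + alpha_0}) *)
Fixpoint Ba0pair (n : nat) : A * A :=
  match n with
  | 0 => (Wp 0, Wn 0 + Bcoef *: comm Bdelta (Wp 0))
  | m.+1 => let p := Ba0pair m in (p.2, p.1 + Bcoef *: comm Bdelta p.2)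
  end.

(* pairs (B_{n delta + alpha_1}, B_{(n+1) delta + alpha_1}) *)
Fixpoint Ba1pair (n : nat) : A * A :=
  match n with
  | 0 => (Wn 0, Wp 0 - Bcoef *: comm Bdelta (Wn 0))
  | m.+1 => let p := Ba1pair m in (p.2, p.1 - Bcoef *: comm Bdelta p.2)
  end.

Definition Ba0 (n : nat) : A := (Ba0pair n).1.
Definition Ba1 (n : nat) : A := (Ba1pair n).1.

(* extension to integer k: B_{k delta + alpha_0} = B_{(-k-1) delta + alpha_1}
   for k < 0, and symmetrically. *)
Definition Btil0 (k : int) : A :=
  match k with Posz n => Ba0 n | Negz n => Ba1 n end.
Definition Btil1 (k : int) : A :=
  match k with Posz n => Ba1 n | Negz n => Ba0 n end.

End Oq.

From mathcomp Require Import all_boot all_order all_algebra.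
Import Order.TTheory GRing.Theory Num.Theory.
From mathcomp Require Import zify ring.
Local Open Scope ring_scope.
Set Implicit Arguments. Unset Strict Implicit. Unset Printing Implicit Defensive.

(* The relations of O_q give
     W_{n+2} = W_{-n} + rho^-1 [G_{n+1}, W_1]_q,
     W_{-n-1} = W_{n+1} + rho^-1 [W_0, G_{n+1}]_q,
   and they imply [G_{k+1}, W_1] = -q [B_delta, W_{k+1}],
   [G_{k+1}, W_0] = -q [B_delta, W_{-k}] and [G_{k+1}, B_delta] = 0.
   Hence the q-commutator is (q - q^-1) G_{n+1} W_1 plus a multiple of
   [B_delta, W_{n+1}].  Substituting the induction hypothesis, B_delta passes
   the G's and acts on each tilde B through the recursion
   tilde B_{(j+1) delta + alpha_0} = tilde B_{(j-1) delta + alpha_0}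
                                     + c [B_delta, tilde B_{j delta + alpha_0}]
   with c = q / ((q - q^-1) (q^2 - q^-2)), valid for all integers j (and
   similarly for alpha_1 with -c), so that Pascal's rule for the binomial
   coefficients reassembles the sum at rank n + 1. *)

Section AlgebraNormalization.
Variables (F : fieldType) (A : algType F).

Inductive scal_term := SVar of nat | SZero | SOne
  | SAdd of scal_term & scal_term | SMul of scal_term & scal_term
  | SOpp of scal_term.

Inductive alg_term := AAtom of nat | AZero | AOne
  | AAdd of alg_term & alg_term | AOpp of alg_term
  | AMul of alg_term & alg_term | AScale of nat & alg_term.

Notation lincomb := (seq (scal_term * seq nat)).

Variables (scalars : seq F) (atoms : seq A).

Fixpoint scal_eval (c : scal_term) : F :=
  match c with
  | SVar i => nth 0 scalars i | SZero => 0 | SOne => 1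
  | SAdd a b => scal_eval a + scal_eval b
  | SMul a b => scal_eval a * scal_eval b
  | SOpp a => - scal_eval a
  end.

Fixpoint alg_eval (t : alg_term) : A :=
  match t with
  | AAtom i => nth 0 atoms i | AZero => 0 | AOne => 1
  | AAdd a b => alg_eval a + alg_eval b | AOpp a => - alg_eval a
  | AMul a b => alg_eval a * alg_eval b
  | AScale i a => nth 0 scalars i *: alg_eval a
  end.

Fixpoint word_eval (w : seq nat) : A :=
  if w is i :: w' then nth 0 atoms i * word_eval w' else 1.

Definition lincomb_eval (p : lincomb) : A :=
  \sum_(m <- p) scal_eval m.1 *: word_eval m.2.

Definition lincomb_mul (p1 p2 : lincomb) : lincomb :=
  flatten [seq [seq (SMul m1.1 m2.1, m1.2 ++ m2.2) | m2 <- p2] | m1 <- p1].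

Fixpoint normalize (t : alg_term) : lincomb :=
  match t with
  | AAtom i => [:: (SOne, [:: i])] | AZero => [::] | AOne => [:: (SOne, [::])]
  | AAdd a b => normalize a ++ normalize b
  | AOpp a => [seq (SOpp m.1, m.2) | m <- normalize a]
  | AMul a b => lincomb_mul (normalize a) (normalize b)
  | AScale i a => [seq (SMul (SVar i) m.1, m.2) | m <- normalize a]
  end.

Lemma word_eval_cat w1 w2 : word_eval (w1 ++ w2) = word_eval w1 * word_eval w2.
Proof. by elim: w1 => [|i w IH] /=; rewrite ?mul1r // IH mulrA. Qed.

Lemma lincomb_eval_cat p1 p2 :
  lincomb_eval (p1 ++ p2) = lincomb_eval p1 + lincomb_eval p2.
Proof. by rewrite /lincomb_eval big_cat. Qed.

Lemma lincomb_eval_mul p1 p2 :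
  lincomb_eval (lincomb_mul p1 p2) = lincomb_eval p1 * lincomb_eval p2.
Proof.
elim: p1 => [|m p IH]; first by rewrite /lincomb_eval big_nil mul0r.
rewrite /lincomb_mul /= -/(lincomb_mul p p2) lincomb_eval_cat IH.
rewrite /lincomb_eval big_cons mulrDl; congr (_ + _).
rewrite big_map mulr_sumr; apply: eq_bigr => m2 _ /=.
by rewrite word_eval_cat -scalerAl -scalerAr scalerA.
Qed.

Lemma normalizeK t : lincomb_eval (normalize t) = alg_eval t.
Proof.
rewrite /lincomb_eval.
elim: t => [i||| a IHa b IHb | a IHa | a IHa b IHb | i a IHa] /=.
- by rewrite big_seq1 /= mulr1 scale1r.
- by rewrite big_nil.
- by rewrite big_seq1 scale1r.
- by rewrite big_cat IHa IHb.
- by rewrite big_map -IHa -sumrN; apply: eq_bigr => m _; rewrite scaleNr.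
- by rewrite -IHa -IHb -lincomb_eval_mul.
- by rewrite big_map -IHa scaler_sumr; apply: eq_bigr => m _; rewrite scalerA.
Qed.

Definition coef (p : lincomb) (w : seq nat) : scal_term :=
  foldr (fun m acc => if m.2 == w then SAdd m.1 acc else acc) SZero p.

Lemma coefE p w : scal_eval (coef p w) = \sum_(m <- p | m.2 == w) scal_eval m.1.
Proof.
elim: p => [|m p IH] /=; first by rewrite big_nil.
by rewrite big_cons; case: ifP => _ //=; rewrite IH.
Qed.

Lemma lincomb_eval_coef p ws : uniq ws -> {subset map snd p <= ws} ->
  lincomb_eval p = \sum_(w <- ws) scal_eval (coef p w) *: word_eval w.
Proof.
move=> uniq_ws; elim: p => [|m p IH] p_ws.
  by rewrite /lincomb_eval big_nil big1 // => w _; rewrite scale0r.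
have m_ws : m.2 \in ws by apply: p_ws; rewrite inE eqxx.
rewrite /lincomb_eval big_cons -/(lincomb_eval p).
rewrite IH => [|w wp]; last by apply: p_ws; rewrite inE wp orbT.
rewrite (bigD1_seq m.2) //= [in RHS](bigD1_seq m.2) //= eqxx scalerDl addrA.
by congr (_ + _); apply: eq_bigr => w; rewrite eq_sym => /negbTE ->.
Qed.

Definition coef_pairs (p1 p2 : lincomb) : seq (scal_term * scal_term) :=
  [seq (coef p1 w, coef p2 w) | w <- undup (map snd (p1 ++ p2))].

Fixpoint all_scal_eq (l : seq (scal_term * scal_term)) : Prop :=
  if l is c :: l' then scal_eval c.1 = scal_eval c.2 /\ all_scal_eq l' else True.

Lemma all_scal_eq_map (f g : seq nat -> scal_term) ws :
  all_scal_eq [seq (f w, g w) | w <- ws] ->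
  forall w, w \in ws -> scal_eval (f w) = scal_eval (g w).
Proof.
elim: ws => [|a l IH] //= [fg_a fg_l] w.
by rewrite inE => /orP[/eqP -> //|]; exact: IH.
Qed.

Lemma alg_eval_eq t1 t2 :
  all_scal_eq (coef_pairs (normalize t1) (normalize t2)) -> alg_eval t1 = alg_eval t2.
Proof.
move=> coefs_eq; rewrite -!normalizeK.
set ws := undup (map snd (normalize t1 ++ normalize t2)).
have sub1 : {subset map snd (normalize t1) <= ws}.
  by move=> w w1; rewrite mem_undup map_cat mem_cat w1.
have sub2 : {subset map snd (normalize t2) <= ws}.
  by move=> w w2; rewrite mem_undup map_cat mem_cat w2 orbT.
rewrite !(@lincomb_eval_coef _ ws) ?undup_uniq //.
by apply: eq_big_seq => w w_ws; rewrite (all_scal_eq_map coefs_eq).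
Qed.

End AlgebraNormalization.

Ltac list_index x l :=
  match l with
  | x :: _ => constr:(0%N)
  | _ :: ?l' => let n := list_index x l' in constr:(S n)
  end.

Ltac list_add x l :=
  match constr:(tt) with
  | _ => let _ := list_index x l in constr:(l)
  | _ => constr:(x :: l)
  end.

Ltac collect_atoms t al sl :=
  match t with
  | (?a + ?b)%R => let r := collect_atoms a al sl in
                   match r with (?al', ?sl') => collect_atoms b al' sl' end
  | (- ?a)%R => collect_atoms a al sl
  | (?a * ?b)%R => let r := collect_atoms a al sl in
                   match r with (?al', ?sl') => collect_atoms b al' sl' end
  | (?c *: ?a)%R => let sl' := list_add c sl in collect_atoms a al sl'
  | 0%R => constr:((al, sl))
  | 1%R => constr:((al, sl))
  | _ => let al' := list_add t al in constr:((al', sl))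
  end.

Ltac reify_alg t al sl :=
  match t with
  | (?a + ?b)%R => let x := reify_alg a al sl in let y := reify_alg b al sl in
                   constr:(AAdd x y)
  | (- ?a)%R => let x := reify_alg a al sl in constr:(AOpp x)
  | (?a * ?b)%R => let x := reify_alg a al sl in let y := reify_alg b al sl in
                   constr:(AMul x y)
  | (?c *: ?a)%R => let i := list_index c sl in let x := reify_alg a al sl in
                    constr:(AScale i x)
  | 0%R => constr:(AZero)
  | 1%R => constr:(AOne)
  | _ => let i := list_index t al in constr:(AAtom i)
  end.

(* [alg_ring F] proves an identity in an F-algebra: both sides are expanded into
   linear combinations of words in the atoms, and the coefficients of each word
   are compared by [ring], or by [field] with nonzero side conditions closed
   from the context. *)
Ltac alg_ring_coefs F :=
  match goal with
  | |- ?L = ?R =>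
    let TA := type of L in
    let r0 := collect_atoms L (@nil TA) (@nil (GRing.Field.sort F)) in
    match r0 with (?al0, ?sl0) =>
    let r := collect_atoms R al0 sl0 in
    match r with (?al, ?sl) =>
    let tl := reify_alg L al sl in
    let tr := reify_alg R al sl in
    change (alg_eval sl al tl = alg_eval sl al tr);
    apply: alg_eval_eq;
    let c := eval vm_compute in (coef_pairs (normalize tl) (normalize tr)) in
    change (all_scal_eq sl c);
    cbv beta iota delta [all_scal_eq scal_eval nth fst snd]
    end end
  end.

Ltac alg_ring F :=
  alg_ring_coefs F; repeat split;
  first [ring | field; repeat (apply/andP; split); try assumption].

Section BinomialSums.
Variables (F : fieldType) (A : algType F).

Definition binom_sum (r : F) (k : nat) (Z : int -> A) : A :=
  \sum_(l < k.+1) ('C(k, l)%:R * r ^ (2 * l%:Z - k%:Z)) *: Z (k%:Z - 2 * l%:Z).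

Definition conv_binom_sum (r h : F) (g : nat -> A) (Z : int -> A) (n : nat) : A :=
  \sum_(k < n.+1) h ^+ (k + 2) *: (g (n - k)%N * binom_sum r k Z).

Lemma eq_binom_sum r k (Z1 Z2 : int -> A) :
  Z1 =1 Z2 -> binom_sum r k Z1 = binom_sum r k Z2.
Proof. by move=> eqZ; apply: eq_bigr => l _; rewrite eqZ. Qed.

Lemma binom_sumD r k (Z1 Z2 : int -> A) :
  binom_sum r k (fun j => Z1 j + Z2 j) = binom_sum r k Z1 + binom_sum r k Z2.
Proof. by rewrite /binom_sum -big_split; apply: eq_bigr => l _; rewrite scalerDr. Qed.

Lemma comm_sumr (X : A) I (r : seq I) (P : pred I) (f : I -> A) :
  comm X (\sum_(i <- r | P i) f i) = \sum_(i <- r | P i) comm X (f i).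
Proof. by rewrite /comm mulr_sumr mulr_suml -sumrB. Qed.

Lemma comm_scaler (X : A) c Y : comm X (c *: Y) = c *: comm X Y.
Proof. by rewrite /comm scalerBr -scalerAr -scalerAl. Qed.

Lemma binom_sum_comm r k d (X : A) (Z : int -> A) :
  binom_sum r k (fun j => d *: comm X (Z j)) = d *: comm X (binom_sum r k Z).
Proof.
rewrite /binom_sum comm_sumr scaler_sumr; apply: eq_bigr => l _.
by rewrite comm_scaler !scalerA mulrC.
Qed.

Lemma binom_sum0 r (Z : int -> A) : binom_sum r 0 Z = Z 0.
Proof. by rewrite /binom_sum big_ord1 bin0 mul1r expr0z scale1r. Qed.

Lemma binom_sumS r k (Z : int -> A) : r != 0 ->
  binom_sum r k.+1 Z =
  r^-1 *: binom_sum r k (fun j => Z (j + 1)) + r *: binom_sum r k (fun j => Z (j - 1)).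
Proof.
move=> r0; have expS j : r ^ (j + 1) = r ^ j * r by rewrite expfzDr // expr1z.
have expP j : r ^ (j - 1) = r^-1 * r ^ j by rewrite expfzDr // mulrC -invr_expz expr1z.
have bump0 i : bump 0 i = i.+1 by [].
rewrite {1}/binom_sum big_ord_recl.
under eq_bigr => i _ do rewrite lift0 binS natrD mulrDl scalerDl.
rewrite big_split /= addrA; congr (_ + _).
- rewrite [in RHS]/binom_sum [in RHS]big_ord_recl [in LHS]big_ord_recr /=.
  rewrite (bin_small (ltnSn k)) mul0r scale0r addr0 scalerDr scaler_sumr.
  congr (_ + _).
  + rewrite !bin0 !mul1r scalerA -expP; congr (_ *: Z _); [congr (r ^ _)|]; lia.
  + rewrite addr0; apply: eq_bigr => i _; rewrite bump0 scalerA mulrCA -expP.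
    by congr (_ *: Z _); [congr (_ * r ^ _)|]; lia.
- rewrite /binom_sum scaler_sumr; apply: eq_bigr => i _.
  rewrite scalerA mulrCA [r * _]mulrC -expS.
  by congr (_ *: Z _); [congr (_ * r ^ _)|]; lia.
Qed.

Lemma binom_sumV r k (Z : int -> A) : r != 0 ->
  binom_sum r k Z = binom_sum r^-1 k (fun j => Z (- j)).
Proof.
move=> r0; rewrite /binom_sum (reindex_inj rev_ord_inj) /=; apply: eq_bigr => l _.
have lk : (l <= k)%N by rewrite -ltnS ltn_ord.
rewrite subSS bin_sub // exprz_inv.
by congr (_ *: Z _); [congr (_ * r ^ _)|]; lia.
Qed.

Lemma pascal_term (P h r d : F) (g X IZ IZm : A) :
  h * (r + r^-1) = 1 -> g * X = X * g -> r != 0 ->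
  (P * h) *: (g * (r^-1 *: (IZm + d *: comm X IZ) + r *: IZm)) =
  P *: (g * IZm) + (r^-1 * d * h) *: comm X (P *: (g * IZ)).
Proof.
move=> hr gX r0; apply/eqP; rewrite -subr_eq0; apply/eqP.
have -> : (P * h) *: (g * (r^-1 *: (IZm + d *: comm X IZ) + r *: IZm)) -
  (P *: (g * IZm) + (r^-1 * d * h) *: comm X (P *: (g * IZ))) =
  (P * h * r^-1 * d) *: ((g * X - X * g) * IZ)
  + (P * (h * (r + r^-1)) - P) *: (g * IZm).
  by rewrite /comm; alg_ring F.
by rewrite gX subrr mul0r scaler0 add0r hr mulr1 subrr scale0r.
Qed.

Lemma conv_binom_sumS r h d g X (Z : int -> A) n :
  r != 0 -> h * (r + r^-1) = 1 -> (forall i, g i * X = X * g i) ->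
  (forall j, Z (j + 1) = Z (j - 1) + d *: comm X (Z j)) ->
  conv_binom_sum r h g Z n.+1 =
    conv_binom_sum r h g (fun j => Z (j - 1)) n + h ^+ 2 *: (g n.+1 * Z 0)
    + (r^-1 * d * h) *: comm X (conv_binom_sum r h g Z n).
Proof.
move=> r0 hr gX Zrec.
rewrite {1}/conv_binom_sum big_ord_recl subn0 binom_sum0 add0n.
rewrite addrC -addrA [h^+2 *: _ + _]addrC addrA; congr (_ + _).
rewrite /conv_binom_sum comm_sumr scaler_sumr -big_split; apply: eq_bigr => k _.
rewrite lift0 subSS binom_sumS // (eq_binom_sum _ _ Zrec) binom_sumD binom_sum_comm.
by rewrite (_ : (k.+1 + 2)%N = (k + 2).+1) // exprSr pascal_term.
Qed.

End BinomialSums.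

Section QParameter.
Variables (F : fieldType) (q : F).
Hypotheses (q_neq0 : q != 0) (q_not_root1 : forall m, (0 < m)%N -> q ^+ m != 1).

Lemma sqrq_neqN1 : q ^+ 2 != -1.
Proof.
apply: contraNneq (q_not_root1 (isT : (0 < 4)%N)) => sqrq.
by rewrite (_ : 4 = 2 * 2)%N // exprM sqrq sqrrN expr1n.
Qed.

Lemma sqrq_sub1_neq0 : q * q - 1 != 0.
Proof. by rewrite subr_eq0 -expr2 q_not_root1. Qed.

Lemma sqrq_add1_neq0 : q * q + 1 != 0.
Proof. by rewrite -expr2 -[1]opprK subr_eq0 sqrq_neqN1. Qed.

Lemma expq4_sub1_neq0 : (q * q) ^+ 2 - 1 != 0.
Proof. by rewrite subr_eq0 -expr2 -exprM q_not_root1. Qed.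

Lemma addq_invq_neq0 : q + q^-1 != 0.
Proof.
have -> : q + q^-1 = (q * q + 1) / q by field.
by rewrite mulf_neq0 ?invr_eq0 ?sqrq_add1_neq0.
Qed.

Lemma subq_invq_neq0 : q - q^-1 != 0.
Proof.
have -> : q - q^-1 = (q * q - 1) / q by field.
by rewrite mulf_neq0 ?invr_eq0 ?sqrq_sub1_neq0.
Qed.

Lemma qint2E : qint q 2 = q + q^-1.
Proof. by rewrite /qint; field; rewrite q_neq0 sqrq_sub1_neq0. Qed.

Lemma rho_neq0 : rho q != 0.
Proof.
rewrite /rho (_ : q ^+ 2 - q ^- 2 = (q - q^-1) * (q + q^-1)); last by field.
by rewrite oppr_eq0 expf_neq0 // mulf_neq0 ?subq_invq_neq0 ?addq_invq_neq0.
Qed.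

End QParameter.

Section Oq.
Variables (F : fieldType) (A : algType F) (q : F).
Hypotheses (q_neq0 : q != 0) (q_not_root1 : forall m, (0 < m)%N -> q ^+ m != 1).
Variables (Wn Wp G Gt : nat -> A).
Hypothesis Oq_rel : Oq_relations q Wn Wp G Gt.

Local Notation W0 := (Wn 0).
Local Notation W1 := (Wp 0).
Local Notation Bd := (Bdelta q Wn Wp).
Local Notation t := (q + q^-1).

Lemma comm_W0_Wp k : comm W0 (Wp k) = t^-1 *: (Gt k - G k).
Proof. by case: (Oq_rel k 0) => ->. Qed.
Lemma comm_Wn_W1 k : comm (Wn k) W1 = t^-1 *: (Gt k - G k).
Proof. by move: (Oq_rel k 0); do 1![case=> _]; case=> ->. Qed.
Lemma qcomm_W0_G k : qcomm q W0 (G k) = rho q *: Wn k.+1 - rho q *: Wp k.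
Proof. by move: (Oq_rel k 0); do 2![case=> _]; case=> ->. Qed.
Lemma qcomm_Gt_W0 k : qcomm q (Gt k) W0 = rho q *: Wn k.+1 - rho q *: Wp k.
Proof. by move: (Oq_rel k 0); do 3![case=> _]; case=> ->. Qed.
Lemma qcomm_G_W1 k : qcomm q (G k) W1 = rho q *: Wp k.+1 - rho q *: Wn k.
Proof. by move: (Oq_rel k 0); do 4![case=> _]; case=> ->. Qed.
Lemma qcomm_W1_Gt k : qcomm q W1 (Gt k) = rho q *: Wp k.+1 - rho q *: Wn k.
Proof. by move: (Oq_rel k 0); do 5![case=> _]; case=> ->. Qed.
Lemma comm_Wn_Wn k l : comm (Wn k) (Wn l) = 0.
Proof. by move: (Oq_rel k l); do 6![case=> _]; case=> ->. Qed.
Lemma comm_Wp_Wp k l : comm (Wp k) (Wp l) = 0.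
Proof. by move: (Oq_rel k l); do 7![case=> _]; case=> ->. Qed.
Lemma comm_G_G k l : comm (G k) (G l) = 0.
Proof. by move: (Oq_rel k l); do 13![case=> _]; case=> ->. Qed.
Lemma comm_Gt_Gt k l : comm (Gt k) (Gt l) = 0.
Proof. by move: (Oq_rel k l); do 14![case=> _]; case=> ->. Qed.
Lemma comm_Gt_G_anti k l : comm (Gt k) (G l) + comm (G k) (Gt l) = 0.
Proof. by move: (Oq_rel k l); do 15![case=> _] => ->. Qed.

Lemma eq_of_scale_subr (c : F) (x y : A) : c != 0 -> c *: (x - y) = 0 -> x = y.
Proof. by move=> c0 /eqP; rewrite scaler_eq0 (negbTE c0) subr_eq0 => /eqP. Qed.

(* Subtract the two expressions of rho W_{k+2} and eliminate tilde G_{k+1}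
   through [W_0, W_{k+1}]: what is left is
   (q + q^-1) ([G_{k+1}, W_1] + q [B_delta, W_{k+1}]) up to multiples of
   [W_{k+1}, W_1] = 0. *)
Lemma comm_G_W1 k : comm (G k) W1 = - q *: comm Bd (Wp k).
Proof.
have t_neq0 := addq_invq_neq0 q_neq0 q_not_root1.
have GtE : Gt k = G k + t *: comm W0 (Wp k).
  by rewrite comm_W0_Wp scalerA mulfV // scale1r addrC subrK.
have qcommB : qcomm q (G k) W1 - qcomm q W1 (G k + t *: comm W0 (Wp k)) = 0.
  by rewrite -GtE qcomm_G_W1 qcomm_W1_Gt subrr.
apply: (eq_of_scale_subr t_neq0).
have -> : t *: (comm (G k) W1 - (- q *: comm Bd (Wp k))) =
    (qcomm q (G k) W1 - qcomm q W1 (G k + t *: comm W0 (Wp k)))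
    + (q * t) *: (comm (Wp k) W1 * W0) - (q^-1 * t) *: (W0 * comm (Wp k) W1).
  by rewrite /comm /qcomm /Bdelta; alg_ring F.
by rewrite qcommB comm_Wp_Wp mul0r mulr0 !scaler0 add0r subr0.
Qed.

Lemma comm_G_W0 k : comm (G k) W0 = - q *: comm Bd (Wn k).
Proof.
have t_neq0 := addq_invq_neq0 q_neq0 q_not_root1.
have GtE : Gt k = G k + t *: comm (Wn k) W1.
  by rewrite comm_Wn_W1 scalerA mulfV // scale1r addrC subrK.
have qcommB : qcomm q W0 (G k) - qcomm q (G k + t *: comm (Wn k) W1) W0 = 0.
  by rewrite -GtE qcomm_W0_G qcomm_Gt_W0 subrr.
apply: (eq_of_scale_subr t_neq0).
have -> : t *: (comm (G k) W0 - (- q *: comm Bd (Wn k))) =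
    - (qcomm q W0 (G k) - qcomm q (G k + t *: comm (Wn k) W1) W0)
    + (q * t) *: (W1 * comm (Wn k) W0) - (q^-1 * t) *: (comm (Wn k) W0 * W1).
  by rewrite /comm /qcomm /Bdelta; alg_ring F.
by rewrite qcommB comm_Wn_Wn mul0r mulr0 !scaler0 !(oppr0, addr0).
Qed.

Lemma comm_comm_W0_W1_comm_W0_Wp k : comm (comm W0 W1) (comm W0 (Wp k)) = 0.
Proof.
rewrite !comm_W0_Wp.
have -> : comm (t^-1 *: (Gt 0 - G 0)) (t^-1 *: (Gt k - G k)) =
  (t^-1 * t^-1) *: (comm (Gt 0) (Gt k) + comm (G 0) (G k)
                    - (comm (Gt 0) (G k) + comm (G 0) (Gt k))).
  by rewrite /comm; alg_ring F.
by rewrite comm_Gt_G_anti comm_G_G comm_Gt_Gt addr0 subr0 scaler0.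
Qed.

(* After the two previous lemmas every term of [G_{k+1}, B_delta] contains one
   of the vanishing commutators [W_{-k}, W_0], [W_{k+1}, W_1],
   [W_{-k}, W_1] - [W_0, W_{k+1}] or [[W_0, W_1], [W_0, W_{k+1}]]. *)
Lemma comm_G_Bdelta k : comm (G k) Bd = 0.
Proof.
have -> : comm (G k) Bd = q^-2 *: (comm (G k) W0 * W1 + W0 * comm (G k) W1)
                         - (comm (G k) W1 * W0 + W1 * comm (G k) W0).
  by rewrite /comm /Bdelta; alg_ring F.
rewrite comm_G_W0 comm_G_W1.
set U := Wp k; set V := Wn k.
have VW0 : comm V W0 = 0 by apply: comm_Wn_Wn.
have UW1 : comm U W1 = 0 by apply: comm_Wp_Wp.
have VW1_W0U : comm V W1 - comm W0 U = 0 by rewrite comm_W0_Wp comm_Wn_W1 subrr.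
have -> : q^-2 *: ((- q *: comm Bd V) * W1 + W0 * (- q *: comm Bd U))
          - ((- q *: comm Bd U) * W0 + W1 * (- q *: comm Bd V)) =
  q^-1 *: comm (comm W0 W1) (comm W0 U)
  - q^-1 *: (W1 * W0 * (comm V W1 - comm W0 U))
  + q^-3 *: (comm V W0 * W1 * W1)
  - q^-1 *: ((comm V W1 - comm W0 U) * W0 * W1)
  - (2%:R * q^-1) *: (W0 * comm U W1 * W0)
  + q *: (comm U W1 * W0 * W0)
  - (2%:R * q^-1) *: (W1 * comm V W0 * W1)
  + q *: (W1 * (comm V W1 - comm W0 U) * W0)
  + q^-3 *: (W0 * (comm V W1 - comm W0 U) * W1)
  + q *: (W1 * W1 * comm V W0)
  + q^-3 *: (W0 * W0 * comm U W1).
  by rewrite /comm /Bdelta; alg_ring F.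
rewrite comm_comm_W0_W1_comm_W0_Wp VW0 UW1 VW1_W0U.
by rewrite !(mulr0, mul0r, scaler0, addr0, subr0).
Qed.

Local Notation B0 := (Btil0 q Wn Wp).
Local Notation B1 := (Btil1 q Wn Wp).
Local Notation c := (Bcoef q).

Lemma Btil0_rec j : B0 (j + 1) = B0 (j - 1) + c *: comm Bd (B0 j).
Proof.
case: j => [[|m]|[|m]].
- have -> : Posz 0 + 1 = Posz 1 by lia.
  have -> : Posz 0 - 1 = Negz 0 by lia.
  by rewrite /Btil0 /Ba0 /Ba1 /=.
- have -> : Posz m.+1 + 1 = Posz m.+2 by lia.
  have -> : Posz m.+1 - 1 = Posz m by lia.
  by rewrite /Btil0 /Ba0 /=.
- have -> : Negz 0 + 1 = Posz 0 by lia.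
  have -> : Negz 0 - 1 = Negz 1 by lia.
  by rewrite /Btil0 /Ba0 /Ba1 /= subrK.
- have -> : Negz m.+1 + 1 = Negz m by lia.
  have -> : Negz m.+1 - 1 = Negz m.+2 by lia.
  by rewrite /Btil0 /Ba1 /= subrK.
Qed.

Lemma Btil1_rec j : B1 (j + 1) = B1 (j - 1) + (- c) *: comm Bd (B1 j).
Proof.
rewrite scaleNr; case: j => [[|m]|[|m]].
- have -> : Posz 0 + 1 = Posz 1 by lia.
  have -> : Posz 0 - 1 = Negz 0 by lia.
  by rewrite /Btil1 /Ba0 /Ba1 /=.
- have -> : Posz m.+1 + 1 = Posz m.+2 by lia.
  have -> : Posz m.+1 - 1 = Posz m by lia.
  by rewrite /Btil1 /Ba1 /=.
- have -> : Negz 0 + 1 = Posz 0 by lia.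
  have -> : Negz 0 - 1 = Negz 1 by lia.
  by rewrite /Btil1 /Ba0 /Ba1 /= addrK.
- have -> : Negz m.+1 + 1 = Negz m by lia.
  have -> : Negz m.+1 - 1 = Negz m.+2 by lia.
  by rewrite /Btil1 /Ba0 /= addrK.
Qed.

Lemma Btil1_opp j : B1 (- j) = B0 (j - 1).
Proof.
case: j => [[|m]|m].
- have -> : - Posz 0 = Posz 0 by lia.
  by have -> : Posz 0 - 1 = Negz 0 by lia.
- have -> : - Posz m.+1 = Negz m by lia.
  by have -> : Posz m.+1 - 1 = Posz m by lia.
- have -> : - Negz m = Posz m.+1 by lia.
  by have -> : Negz m - 1 = Negz m.+1 by lia.
Qed.

Local Notation g := (Gfull q G).
Local Notation h := ((qint q 2)^-1).

Lemma Gfull_Bdelta_comm i : g i * Bd = Bd * g i.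
Proof.
case: i => [|i] /=; first by rewrite mulr_algl mulr_algr.
by apply/eqP; rewrite -subr_eq0; apply/eqP; apply: comm_G_Bdelta.
Qed.

Lemma conv_binom_sum_Btil1 n :
  conv_binom_sum q^-1 h g B1 n = conv_binom_sum q h g (fun j => B0 (j - 1)) n.
Proof.
apply: eq_bigr => k _; congr (_ *: (_ * _)).
by rewrite binom_sumV ?invr_eq0 // invrK; apply: eq_binom_sum => j; rewrite Btil1_opp.
Qed.

Lemma conv_binom_sum_Btil0 n :
  conv_binom_sum q^-1 h g (fun j => B1 (j - 1)) n = conv_binom_sum q h g B0 n.
Proof.
apply: eq_bigr => k _; congr (_ *: (_ * _)).
rewrite binom_sumV ?invr_eq0 // invrK; apply: eq_binom_sum => j.
have -> : - j - 1 = - (j + 1) by lia.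
by rewrite Btil1_opp addrK.
Qed.

Local Notation k0 := (- (q - q^-1)^-1).

Lemma W_expansion n :
  Wp n = k0 *: conv_binom_sum q h g B0 n /\ Wn n = k0 *: conv_binom_sum q^-1 h g B1 n.
Proof.
(* the nonzero facts in the context are the side conditions [alg_ring] needs *)
have t_neq0 := addq_invq_neq0 q_neq0 q_not_root1.
have rho_q_neq0 := rho_neq0 q_neq0 q_not_root1.
have q2_neq1 := sqrq_sub1_neq0 q_not_root1.
have q2_neqN1 := sqrq_add1_neq0 q_not_root1.
have q4_neq1 := expq4_sub1_neq0 q_not_root1.
have invq_neq0 : q^-1 != 0 by rewrite invr_eq0.
have rho_denom_neq0 : - ((q * q) ^+ 2 - 1) ^+ 2 != 0 by rewrite oppr_eq0 expf_neq0.
have h_q : h * (q + q^-1) = 1 by rewrite qint2E // mulVf.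
have h_qinv : h * (q^-1 + q^-1^-1) = 1 by rewrite invrK addrC qint2E // mulVf.
elim: n => [|n [IHp IHn]].
  rewrite /conv_binom_sum !big_ord1 !binom_sum0 /= !mulr_algl !scalerA qint2E //.
  by split; rewrite -[LHS]scale1r; congr (_ *: _);
    field; rewrite q_neq0 q2_neqN1 q2_neq1.
split.
- have WpS : Wp n.+1 = Wn n + (rho q)^-1 *: qcomm q (G n) W1.
    by rewrite qcomm_G_W1 scalerBr !scalerA mulVf // !scale1r addrC subrK.
  have qcommE : qcomm q (G n) W1 = (q - q^-1) *: (G n * W1) + q^-1 *: comm (G n) W1.
    by rewrite /qcomm /comm; alg_ring F.
  rewrite WpS qcommE comm_G_W1 IHp IHn comm_scaler.
  rewrite (conv_binom_sumS n q_neq0 h_q Gfull_Bdelta_comm Btil0_rec).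
  rewrite conv_binom_sum_Btil1 (_ : g n.+1 = G n) // (_ : B0 0 = W1) //.
  by rewrite qint2E // /Bcoef /rho; alg_ring F.
- have WnS : Wn n.+1 = Wp n + (rho q)^-1 *: qcomm q W0 (G n).
    by rewrite qcomm_W0_G scalerBr !scalerA mulVf // !scale1r addrC subrK.
  have qcommE : qcomm q W0 (G n) = (q - q^-1) *: (G n * W0) - q *: comm (G n) W0.
    by rewrite /qcomm /comm; alg_ring F.
  rewrite WnS qcommE comm_G_W0 IHp IHn comm_scaler.
  rewrite (conv_binom_sumS n invq_neq0 h_qinv Gfull_Bdelta_comm Btil1_rec).
  rewrite conv_binom_sum_Btil0 (_ : g n.+1 = G n) // (_ : B1 0 = W0) //.
  by rewrite qint2E // /Bcoef /rho invrK; alg_ring F.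
Qed.

End Oq.

Theorem proposition12p4 (F : fieldType) (A : algType F) (q : F)
  (hq0 : q != 0) (hqroot : forall m : nat, (0 < m)%N -> q ^+ m != 1)
  (Wn Wp G Gt : nat -> A)
  (hrel : Oq_relations q Wn Wp G Gt) (n : nat) :
  Wp n = - (q - q^-1)^-1 *:
    \sum_(k < n.+1) \sum_(l < k.+1)
      (('C(k, l))%:R * q ^ (2 * l%:Z - k%:Z) * (qint q 2)^-1 ^+ (k + 2)) *:
        (Gfull q G (n - k) * Btil0 q Wn Wp (k%:Z - 2 * l%:Z))
  /\
  Wn n = - (q - q^-1)^-1 *:
    \sum_(k < n.+1) \sum_(l < k.+1)
      (('C(k, l))%:R * q ^ (k%:Z - 2 * l%:Z) * (qint q 2)^-1 ^+ (k + 2)) *: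
        (Gfull q G (n - k) * Btil1 q Wn Wp (k%:Z - 2 * l%:Z)).
Proof.
have [-> ->] := W_expansion hq0 hqroot hrel n.
split; congr (_ *: _); apply: eq_bigr => k _;
  rewrite /binom_sum mulr_sumr scaler_sumr; apply: eq_bigr => l _;
  rewrite -scalerAr scalerA mulrC //.
by rewrite exprz_inv opprB.
Qed.
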